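(* Let $a\ge2$ and $F=\breve F(a,a,a)$, with elements $x_1,\dots,x_{3a-1}$. Then, as functions on $\mathcal J(F)$, \begin{multline*} \chi_{x_a}-\chi_{x_{2a}}=\sum_{i=1}^{a}(-iT_i)-(a-1)T_{2a}+\sum_{i=1}^{a-1}(-iT_{3a-i})\\+\sum_{i=1}^{a-1}\sum_{j=0}^i aT_{\{i,2a+j\}}+\sum_{j=1}^{a-1}aT_{\{a,2a+j\}}+\sum_{i=1}^{a-1}(-aT_{\{i,2a-i,2a+i\}}). \end{multline*}
   Context: The fence $\breve F(a,a,a)$ is the poset on $\{x_1,\dots,x_{3a-1}\}$ with cover relations $x_1\lessdot x_2\lessdot\dots\lessdot x_a$, $x_a\gtrdot x_{a+1}\gtrdot\dots\gtrdot x_{2a}$, $x_{2a}\lessdot x_{2a+1}\lessdot\dots\lessdot x_{3a-1}$. $\mathcal J(F)$ is the set of order ideals. $\chi_q(I)=1$ if $q\in\max(I)$, else $0$. For an antichain $A\subseteq F$ the antichain toggleability statistic is $T_A(I)=1$ if $A\subseteq\min(F\setminus I)$, $-1$ if $A\subseteq\max(I)$, and $0$ otherwise. Notation: $T_i=T_{\{x_i\}}$, and $T_{\{i,j\}}=T_{\{x_i,x_j\}}$, $T_{\{i,j,k\}}=T_{\{x_i,x_j,x_k\}}$ (these index sets are antichains). *)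

From mathcomp Require Import all_boot all_order all_algebra.
Set Implicit Arguments. Unset Strict Implicit. Unset Printing Implicit Defensive.
Import GRing.Theory Num.Theory.

(* Element x_i is represented by the
   ordinal i of the ambient finite type 'I_(3a).+1 = {0,...,3a}; the two
   ordinals 0 and 3a are NOT elements of the fence (they are isolated in the
   cover graph and excluded from the ground set [fence a]). *)
Definition carrier (a : nat) := 'I_(3 * a).+1.

Definition fence (a : nat) : {set carrier a} := [set x : carrier a | (0 < nat_of_ord x < 3 * a)%N].

Definition xe (a i : nat) : carrier a := inord i.

(* cover relation  x_i <. x_j  (x_j covers x_i) *)
Definition fcover (a : nat) (u v : carrier a) : bool :=
  let i := nat_of_ord u in let j := nat_of_ord v in
  [|| (1 <= i < a) && (j == i.+1),
      (a < i <= 2 * a) && (i == j.+1)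
    | (2 * a <= i < 3 * a - 1) && (j == i.+1) ].

Definition fle (a : nat) (u v : carrier a) : bool := connect (@fcover a) u v.
Definition flt (a : nat) (u v : carrier a) : bool := (u != v) && fle u v.

Definition is_ideal (a : nat) (I : {set carrier a}) : Prop :=
  I \subset fence a /\
  forall u v, u \in fence a -> v \in fence a -> fle u v -> v \in I -> u \in I.

Definition maxI (a : nat) (I : {set carrier a}) : {set carrier a} :=
  [set q in I | [forall r, (r \in I) ==> ~~ flt q r]].
Definition minC (a : nat) (I : {set carrier a}) : {set carrier a} :=
  [set q in fence a :\: I | [forall r, (r \in fence a :\: I) ==> ~~ flt r q]].

Local Open Scope ring_scope.
Definition chi (a : nat) (q : carrier a) (I : {set carrier a}) : int :=
  if q \in maxI I then 1 else 0.

Definition Ttog (a : nat) (A : {set carrier a}) (I : {set carrier a}) : int :=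
  if A \subset minC I then 1 else if A \subset maxI I then -1 else 0.

Definition T1 (a i : nat) I := Ttog [set xe a i] I.
Definition T2 (a i j : nat) I := Ttog [set xe a i; xe a j] I.
Definition T3 (a i j k : nat) I := Ttog [set xe a i; xe a j; xe a k] I.
Arguments T1 : clear implicits.
Arguments T2 : clear implicits.
Arguments T3 : clear implicits.

From mathcomp Require Import all_boot all_order all_algebra.
From mathcomp Require Import zify.
Import GRing.Theory Num.Theory.
Set Implicit Arguments. Unset Strict Implicit. Unset Printing Implicit Defensive.

(* An order ideal I of the fence is determined by one cut point on each of its
   three chains: I meets x_1 < ... < x_a in the x_j with j < c1, the chain
   x_a > ... > x_2a in the x_j with c2 <= j, and x_2a < ... < x_(3a-1) in the
   x_j with j < c3, the three descriptions agreeing at x_a and x_2a.  Covers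
   join neighbours x_j, x_(j+1), so x_k is maximal in I (minimal in F \ I)
   iff it is in I (outside I) and its neighbours that cover it (that it covers)
   are not; max(I) and min(F \ I) are thus explicit in c1, c2, c3.  Every T_A is
   then an explicit function of the cuts, each sum of the identity has at most
   two nonzero terms and has a closed form, and the identity reduces to a case
   analysis on linear constraints between a, c1, c2, c3. *)

Section ConnectSteps.
Variable T : finType.

Lemma connect_first_step (e : rel T) x y :
  connect e x y -> x != y -> exists2 z, e x z & connect e z y.
Proof.
case/connectP=> [[|z p]] /= => [_ -> | /andP[exz pz] yE _]; first by rewrite eqxx.
by exists z => //; apply/connectP; exists p.
Qed.

Lemma connect_last_step (e : rel T) x y :
  connect e x y -> x != y -> exists2 z, connect e x z & e z y.
Proof.
move=> exy nxy; have eyx : connect [rel u v | e v u] y x by rewrite connect_rev.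
have [|z ezy zx] := connect_first_step eyx; first by rewrite eq_sym.
by exists z => //; move: zx; rewrite connect_rev.
Qed.

End ConnectSteps.

Lemma downclosed_threshold (g : pred nat) lo n :
  (forall k, lo <= k < lo + n -> g k.+1 -> g k) ->
  exists2 t, lo <= t <= (lo + n).+1 & forall k, lo <= k <= lo + n -> g k = (k < t).
Proof.
elim: n => [|n IH] g_down.
  exists (lo + g lo) => [|k]; first by case: (g lo); lia.
  by rewrite addn0 -eqn_leq => /eqP <-; case: (g lo); lia.
have [|t t_range gE] := IH; first by move=> k k_range; apply: g_down; lia.
rewrite addnS; set top := (lo + n).+1.
have gE' k : lo <= k <= top -> g k = if k == top then g top else k < t.
  by move=> k_range; case: eqP => [-> // | k_ne]; apply: gE; lia.
case g_top: (g top).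
  have : g (lo + n) by apply: g_down => //; lia.
  rewrite gE; last lia; move=> t_big.
  by exists top.+1 => [|k /gE' ->]; [lia | case: (k =P top); lia].
by exists t => [|k /gE' ->]; [lia | case: (k =P top); lia].
Qed.

Lemma big_nat_two_terms (V : nmodType) m n t1 t2 (F : nat -> V) :
  (forall i, m <= i < n -> i != t1 -> i != t2 -> F i = 0%R) ->
  (\sum_(m <= i < n) F i =
    (if (m <= t1 < n)%N then F t1 else 0)
   + (if (m <= t2 < n)%N && (t2 != t1) then F t2 else 0))%R.
Proof.
move=> F0; rewrite (bigID (pred1 t1)) /= big_nat1_eq; congr (_ + _)%R.
rewrite (bigID (pred1 t2)) /= big_nat1_cond_eq andbC eq_sym big1_seq ?addr0 // => i.
by rewrite mem_index_iota => /andP[/andP[] ? ?] /F0; apply.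
Qed.

Ltac decide_nat_atom t :=
  first [ have -> : t = true by lia | have -> : t = false by lia | case: (boolP t) => ? ];
  rewrite /=.

Ltac decide_nat_atoms :=
  repeat match goal with
  | |- context [leq ?x ?y] => decide_nat_atom (leq x y)
  | |- context [@eq_op _ ?x ?y] => decide_nat_atom (x == y)
  end.

Ltac lia_cases := decide_nat_atoms; first [done | lia].

Ltac case_regions k a :=
  have [|[|[|[|[|[]]]]]] : k = 0 \/ 0 < k < a \/ k = a \/ a < k < 2 * a
                            \/ k = 2 * a \/ 2 * a < k < 3 * a \/ 3 * a <= k by lia.

Section Fence.
Variable a : nat.

Definition ncover (i j : nat) : bool :=
  [|| (1 <= i < a) && (j == i.+1), (a < i <= 2 * a) && (i == j.+1)
    | (2 * a <= i < 3 * a - 1) && (j == i.+1)].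

Lemma fcoverE (u v : carrier a) : fcover u v = ncover u v.
Proof. by []. Qed.

Lemma val_xe k : val (xe a k) = if k <= 3 * a then k else 0.
Proof. by rewrite val_insubd ltnS. Qed.

Lemma xe_val (u : carrier a) : xe a u = u.
Proof. exact: inord_val. Qed.

Lemma xe_fence k : (xe a k \in fence a) = (0 < k < 3 * a).
Proof. by rewrite inE val_xe; case: ifP; lia. Qed.

Lemma fcover_fence (u v : carrier a) : fcover u v -> (u \in fence a) && (v \in fence a).
Proof. by rewrite fcoverE /ncover !inE; lia. Qed.

Lemma fcover_neq (u v : carrier a) : fcover u v -> u != v.
Proof. by rewrite fcoverE /ncover => uv; apply/eqP => /(congr1 val) /=; move: uv; lia. Qed.

Lemma fcover_xe i j : fcover (xe a i) (xe a j) = ncover i j.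
Proof. by rewrite fcoverE !val_xe /ncover; do 2 case: ifP; lia. Qed.

Definition in_cut (c1 c2 c3 j : nat) : bool :=
  [|| (0 < j <= a) && (j < c1), (a < j <= 2 * a) && (c2 <= j) | (2 * a < j < 3 * a) && (j < c3)].

Section Ideal.
Variable I : {set carrier a}.
Hypothesis I_ideal : is_ideal I.

Lemma ideal_fence u : u \in I -> u \in fence a.
Proof. by case: I_ideal => /subsetP + _; apply. Qed.

Lemma ideal_fle u v : fle u v -> v \in I -> u \in I.
Proof.
move=> uv vI; have [-> // | u_ne_v] := eqVneq u v.
have [w uw _] := connect_first_step uv u_ne_v.
have /andP[uF _] := fcover_fence uw.
by case: I_ideal => _ /(_ u v uF (ideal_fence vI) uv vI).
Qed.

Lemma maxI_cover q : (q \in maxI I) = (q \in I) && [forall c, fcover q c ==> (c \notin I)].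
Proof.
rewrite inE; case: (q \in I) => //=; apply/forallP/forallP => q_max c.
  apply/implyP => qc; move: (q_max c).
  by rewrite /flt /fle connect1 // fcover_neq //; case: (c \in I).
apply/implyP => cI; apply/negP => /andP[q_ne_c /connect_first_step /(_ q_ne_c) [w qw wc]].
by move: (q_max w); rewrite qw (ideal_fle wc cI).
Qed.

Lemma minC_cover q : (q \in minC I) =
  [&& q \in fence a, q \notin I & [forall c, fcover c q ==> (c \in I)]].
Proof.
rewrite inE in_setD; case: (q \in fence a); case: (q \in I) => //=.
apply/forallP/forallP => q_min c.
  apply/implyP => cq; move: (q_min c); have /andP[cF _] := fcover_fence cq.
  by rewrite in_setD cF /flt /fle connect1 // fcover_neq //; case: (c \in I).
apply/implyP; rewrite in_setD => /andP[cI _].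
apply/negP => /andP[c_ne_q /connect_last_step /(_ c_ne_q) [w cw wq]].
by have := q_min w; rewrite wq => /(ideal_fle cw); rewrite (negbTE cI).
Qed.

Lemma maxI_neighbours k : (xe a k \in maxI I) =
  [&& xe a k \in I, (a < k <= 2 * a) ==> (xe a k.-1 \notin I)
    & (0 < k < a) || (2 * a <= k < 3 * a - 1) ==> (xe a k.+1 \notin I)].
Proof.
rewrite maxI_cover; congr (_ && _).
have <- : ncover k k.-1 = (a < k <= 2 * a) by rewrite /ncover; lia.
have <- : ncover k k.+1 = (0 < k < a) || (2 * a <= k < 3 * a - 1) by rewrite /ncover; lia.
apply/forallP/andP => [k_max | [lower upper] c].
  by rewrite -!fcover_xe; split; apply: k_max.
rewrite -[c]xe_val fcover_xe; apply/implyP => kc.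
have [cE | cE] : c = k.-1 :> nat \/ c = k.+1 :> nat by move: kc; rewrite /ncover; lia.
  by rewrite cE in kc *; apply: (implyP lower).
by rewrite cE in kc *; apply: (implyP upper).
Qed.

Lemma minC_neighbours k : (xe a k \in minC I) =
  [&& xe a k \in fence a, xe a k \notin I,
      (1 < k <= a) || (2 * a < k < 3 * a) ==> (xe a k.-1 \in I)
    & (a <= k < 2 * a) ==> (xe a k.+1 \in I)].
Proof.
rewrite minC_cover; do 2 congr (_ && _).
have <- : ncover k.-1 k = (1 < k <= a) || (2 * a < k < 3 * a) by rewrite /ncover; lia.
have <- : ncover k.+1 k = (a <= k < 2 * a) by rewrite /ncover; lia.
apply/forallP/andP => [k_min | [lower upper] c].
  by rewrite -!fcover_xe; split; apply: k_min.
rewrite -[c]xe_val fcover_xe; apply/implyP => ck.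
have [cE | cE] : c = k.-1 :> nat \/ c = k.+1 :> nat by move: ck; rewrite /ncover; lia.
  by rewrite cE in ck *; apply: (implyP lower).
by rewrite cE in ck *; apply: (implyP upper).
Qed.

Lemma xe_notin_ideal j : ~~ (0 < j < 3 * a) -> xe a j \notin I.
Proof. by apply: contraNN => /ideal_fence; rewrite xe_fence. Qed.

Lemma ideal_cuts : 0 < a -> exists c1 c2 c3,
  [/\ [&& 0 < c1 <= a.+1, a <= c2 <= (2 * a).+1 & 2 * a <= c3 <= 3 * a],
      (a < c1) = (c2 <= a), (c2 <= 2 * a) = (2 * a < c3)
    & forall j, (xe a j \in I) = in_cut c1 c2 c3 j].
Proof.
move=> a_gt0.
have cover_step i j : ncover i j -> xe a j \in I -> xe a i \in I.
  by rewrite -fcover_xe => /connect1; apply: ideal_fle.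
have [|c1 c1_range chain1] := @downclosed_threshold (fun k => xe a k \in I) 1 a.-1.
  by move=> k k_range; apply: cover_step; rewrite /ncover; lia.
have [|c2 c2_range chain2] := @downclosed_threshold (fun k => xe a k \notin I) a a.
  by move=> k k_range; apply: contraNN; apply: cover_step; rewrite /ncover; lia.
have [|c3 c3_range chain3] := @downclosed_threshold (fun k => xe a k \in I) (2 * a) a.-1.
  by move=> k k_range; apply: cover_step; rewrite /ncover; lia.
have top1 : (xe a a \in I) = (a < c1) by apply: chain1; lia.
have top2 : (xe a a \notin I) = (a < c2) by apply: chain2; lia.
have bot2 : (xe a (2 * a) \notin I) = (2 * a < c2) by apply: chain2; lia.
have bot3 : (xe a (2 * a) \in I) = (2 * a < c3) by apply: chain3; lia.
exists c1, c2, c3; split.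
- by apply/and3P; split; lia.
- by rewrite top1 in top2; lia.
- by rewrite bot3 in bot2; lia.
move=> j; have [j_in | j_out] := boolP (0 < j < 3 * a); last first.
  by rewrite (negbTE (xe_notin_ideal j_out)) /in_cut; lia.
rewrite /in_cut; have [j_le | j_gt] := leqP j a; first by rewrite chain1; lia.
have [j_le' | j_gt'] := leqP j (2 * a); last by rewrite chain3; lia.
by rewrite -[_ \in I]negbK chain2; lia.
Qed.

Section Cuts.
Variables c1 c2 c3 : nat.
Hypothesis c_range : [&& 0 < c1 <= a.+1, a <= c2 <= (2 * a).+1 & 2 * a <= c3 <= 3 * a].
Hypothesis c12 : (a < c1) = (c2 <= a).
Hypothesis c23 : (c2 <= 2 * a) = (2 * a < c3).
Hypothesis memI : forall j, (xe a j \in I) = in_cut c1 c2 c3 j.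

Definition is_min k : bool :=
  [|| (0 < k < a) && (c1 == k), [&& k == a, c1 == a & c2 == a.+1],
      (a < k <= 2 * a) && (c2 == k.+1) | (2 * a < k < 3 * a) && (c3 == k)].

Definition is_max k : bool :=
  [|| (0 < k <= a) && (c1 == k.+1), (a < k < 2 * a) && (c2 == k),
      [&& k == 2 * a, c2 == 2 * a & c3 == (2 * a).+1] | (2 * a < k < 3 * a) && (c3 == k.+1)].

Lemma in_cut_chain1 j : 0 < j <= a -> in_cut c1 c2 c3 j = (j < c1).
Proof. by rewrite /in_cut; lia. Qed.

Lemma in_cut_chain2 j : a <= j <= 2 * a -> in_cut c1 c2 c3 j = (c2 <= j).
Proof. by rewrite /in_cut; lia. Qed.

Lemma in_cut_chain3 j : 2 * a <= j < 3 * a -> in_cut c1 c2 c3 j = (j < c3).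
Proof. by rewrite /in_cut; lia. Qed.

Lemma in_cut_out j : ~~ (0 < j < 3 * a) -> in_cut c1 c2 c3 j = false.
Proof. by rewrite /in_cut; lia. Qed.

Ltac eval_in_cut :=
  repeat match goal with
  | |- context [in_cut c1 c2 c3 ?j] =>
    first [ rewrite (@in_cut_chain1 j); last lia | rewrite (@in_cut_chain2 j); last lia
          | rewrite (@in_cut_chain3 j); last lia | rewrite (@in_cut_out j); last lia ]
  end.

Lemma maxI_xe k : (xe a k \in maxI I) = is_max k.
Proof.
rewrite maxI_neighbours !memI /is_max.
by case_regions k a => k_reg; decide_nat_atoms; eval_in_cut; lia_cases.
Qed.

Lemma minC_xe k : (xe a k \in minC I) = is_min k.
Proof.
rewrite minC_neighbours xe_fence !memI /is_min.
by case_regions k a => k_reg; decide_nat_atoms; eval_in_cut; lia_cases.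
Qed.

Local Open Scope ring_scope.

Lemma chiE k : chi (xe a k) I = if is_max k then 1 else 0.
Proof. by rewrite /chi maxI_xe. Qed.

Lemma T1E k : T1 a k I = if is_min k then 1 else if is_max k then -1 else 0.
Proof. by rewrite /T1 /Ttog !sub1set minC_xe maxI_xe. Qed.

Lemma T2E i j : T2 a i j I =
  if is_min i && is_min j then 1 else if is_max i && is_max j then -1 else 0.
Proof. by rewrite /T2 /Ttog !subUset !sub1set !minC_xe !maxI_xe. Qed.

Lemma T3E i j k : T3 a i j k I =
  if [&& is_min i, is_min j & is_min k] then 1
  else if [&& is_max i, is_max j & is_max k] then -1 else 0.
Proof. by rewrite /T3 /Ttog !subUset !sub1set !minC_xe !maxI_xe !andbA. Qed.

Lemma sum_T1_chain1 : \sum_(1 <= i < a.+1) - (i%:Z * T1 a i I) =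
  if (c1 < a)%N then -1 else if c1 == a then (if c2 == a.+1 then -1 else a%:Z - 1) else a%:Z.
Proof.
rewrite (big_nat_two_terms (t1 := c1) (t2 := c1.-1)) => [|i i_range ? ?];
  rewrite !T1E /is_min /is_max; lia_cases.
Qed.

Lemma sum_T1_chain3 : \sum_(1 <= i < a) - (i%:Z * T1 a (3 * a - i) I) =
  if (c3 == (2 * a).+1)%N then 1 - a%:Z else if (c3 == 2 * a)%N then 0 else 1.
Proof.
rewrite (big_nat_two_terms (t1 := (3 * a - c3)%N) (t2 := (3 * a - c3).+1)) => [|i i_range ? ?];
  rewrite !T1E /is_min /is_max; lia_cases.
Qed.

Lemma sum_T2_chain1_chain3 :
  \sum_(1 <= i < a) \sum_(0 <= j < i.+1) (a%:Z * T2 a i (2 * a + j) I) =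
    (if ((c1 < a) && (c3 <= 2 * a + c1))%N then a%:Z else 0)
  - (if ((1 < c1 <= a) &&
         ((c2 == 2 * a) && (c3 == (2 * a).+1) || ((2 * a).+1 < c3 <= 2 * a + c1)))%N
     then a%:Z else 0).
Proof.
have chain3_support i j : (0 <= j < i.+1)%N -> j != (c3 - 2 * a)%N -> j != (c3 - 2 * a).-1 ->
    a%:Z * T2 a i (2 * a + j) I = 0.
  move=> j_range ? ?; rewrite T2E.
  have [-> ->] : is_min (2 * a + j)%N = false /\ is_max (2 * a + j)%N = false.
    by rewrite /is_min /is_max; split; lia_cases.
  by rewrite !andbF mulr0.
rewrite (eq_bigr _ (fun i _ => big_nat_two_terms (chain3_support i))).
rewrite (big_nat_two_terms (t1 := c1) (t2 := c1.-1)) => [|i i_range ? ?];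
  rewrite !T2E /is_min /is_max; lia_cases.
Qed.

Lemma sum_T2_top_chain3 : \sum_(1 <= j < a) (a%:Z * T2 a a (2 * a + j) I) =
    (if [&& c1 == a, c2 == a.+1 & 2 * a < c3 < 3 * a]%N then a%:Z else 0)
  - (if ((c1 == a.+1) && ((2 * a).+1 < c3))%N then a%:Z else 0).
Proof.
rewrite (big_nat_two_terms (t1 := (c3 - 2 * a)%N) (t2 := (c3 - 2 * a).-1)) => [|j j_range ? ?];
  rewrite !T2E /is_min /is_max; lia_cases.
Qed.

Hypothesis a_gt1 : (1 < a)%N.

Lemma sum_T3_chains : \sum_(1 <= i < a) (- (a%:Z * T3 a i (2 * a - i) (2 * a + i) I)) =
  if [&& c1 == a, c2 == a.+1 & c3 == 3 * a]%N then a%:Z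
  else if [&& c1 == 1, c2 == 2 * a & c3 == (2 * a).+1]%N then - a%:Z else 0.
Proof.
rewrite (big_nat_two_terms (t1 := c1) (t2 := c1.-1)) => [|i i_range ? ?];
  rewrite !T3E /is_min /is_max; lia_cases.
Qed.

Lemma toggle_identity_cuts : chi (xe a a) I - chi (xe a (2 * a)) I =
    \sum_(1 <= i < a.+1) (- (i%:Z * T1 a i I))
  - (a%:Z - 1) * T1 a (2 * a) I
  + \sum_(1 <= i < a) (- (i%:Z * T1 a (3 * a - i) I))
  + \sum_(1 <= i < a) \sum_(0 <= j < i.+1) (a%:Z * T2 a i (2 * a + j) I)
  + \sum_(1 <= j < a) (a%:Z * T2 a a (2 * a + j) I)
  + \sum_(1 <= i < a) (- (a%:Z * T3 a i (2 * a - i) (2 * a + i) I)).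
Proof.
rewrite sum_T1_chain1 sum_T1_chain3 sum_T2_chain1_chain3 sum_T2_top_chain3 sum_T3_chains.
by rewrite !chiE T1E /is_min /is_max; lia_cases.
Qed.

End Cuts.
End Ideal.
End Fence.

Local Open Scope ring_scope.

Theorem theorem5p8 (a : nat) (ha : (2 <= a)%N) (I : {set carrier a}) :
  is_ideal I ->
  chi (xe a a) I - chi (xe a (2 * a)) I =
    \sum_(1 <= i < a.+1) (- (i%:Z * T1 a i I))
  - (a%:Z - 1) * T1 a (2 * a) I
  + \sum_(1 <= i < a) (- (i%:Z * T1 a (3 * a - i) I))
  + \sum_(1 <= i < a) \sum_(0 <= j < i.+1) (a%:Z * T2 a i (2 * a + j) I)
  + \sum_(1 <= j < a) (a%:Z * T2 a a (2 * a + j) I)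
  + \sum_(1 <= i < a) (- (a%:Z * T3 a i (2 * a - i) (2 * a + i) I)).
Proof.
move=> I_ideal; have [|c1 [c2 [c3 [c_range c12 c23 memI]]]] := ideal_cuts I_ideal; first lia.
exact: (toggle_identity_cuts I_ideal c_range c12 c23 memI ha).
Qed.
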